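(* Let $\phi:Z\to[-\infty,+\infty]$ be proper and closed, and suppose Assumptions (A1) and (A2) hold for some $\lambda\in\mathbb R$. Let $\tau\in(0,1/\lambda^-)$, write $J_\tau z=(J^X_\tau z,J^Y_\tau z)$. Then for every $z=(x,y)\in Z$ and every $z'=(x',y')\in D\phi$: $\frac{\mathsf d_X^2(J^X_\tau z,x')-\mathsf d_X^2(x,x')}{2\tau}+\frac\lambda2\mathsf d_X^2(J^X_\tau z,x')+\phi(J^X_\tau z,J^Y_\tau z)\le\phi(x',J^Y_\tau z)-\frac1{2\tau}\mathsf d_X^2(J^X_\tau z,x)$, $\frac{\mathsf d_Y^2(J^Y_\tau z,y')-\mathsf d_Y^2(y,y')}{2\tau}+\frac\lambda2\mathsf d_Y^2(J^Y_\tau z,y')+\phi(J^X_\tau z,y')\le\phi(J^X_\tau z,J^Y_\tau z)-\frac1{2\tau}\mathsf d_Y^2(J^Y_\tau z,y)$.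
   Context: $(X,\mathsf d_X)$, $(Y,\mathsf d_Y)$ complete metric spaces; $Z=X\times Y$. $D_X\phi=\{x:\phi(x,y)<+\infty\ \forall y\}$, $D_Y\phi=\{y:\phi(x,y)>-\infty\ \forall x\}$, $D\phi=D_X\phi\times D_Y\phi$; proper: $D\phi\ne\emptyset$; closed: for $x\in D_X\phi$, $y\mapsto\phi(x,y)$ upper semicontinuous, for $y\in D_Y\phi$, $x\mapsto\phi(x,y)$ lower semicontinuous. (A1): $\phi=+\infty$ on $(X\setminus D_X\phi)\times D_Y\phi$, $\phi=-\infty$ on $D_X\phi\times(Y\setminus D_Y\phi)$. $\lambda^-=\max\{-\lambda,0\}$, $1/\lambda^-:=+\infty$ if $\lambda^-=0$. $\Phi_\tau(x,y;x',y')=\phi(x',y')+\frac1{2\tau}(\mathsf d_X^2(x',x)-\mathsf d_Y^2(y',y))$. $f$ on $Z$ is $\mu$-convex-concave along curves $\gamma,\sigma$ if for all $t\in[0,1]$: $f(\gamma_t,y)\le(1-t)f(\gamma_0,y)+tf(\gamma_1,y)-\frac\mu2t(1-t)\mathsf d_X^2(\gamma_0,\gamma_1)$ for all $y$ and $f(x,\sigma_t)\ge(1-t)f(x,\sigma_0)+tf(x,\sigma_1)+\frac\mu2t(1-t)\mathsf d_Y^2(\sigma_0,\sigma_1)$ for all $x$. (A2) for $\lambda$: for every $(x,y)\in Z$, $(x_0,y_0),(x_1,y_1)\in D\phi$ there are continuous curves $\gamma$ from $x_0$ to $x_1$, $\sigma$ from $y_0$ to $y_1$ such that for all $\tau\in(0,1/\lambda^-)$,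 $(x',y')\mapsto\Phi_\tau(x,y;x',y')$ is $(\tau^{-1}+\lambda)$-convex-concave along them. Resolvent: $J_\tau z$ is the (unique, existing under these assumptions) saddle point of $z'\mapsto\Phi_\tau(z;z')$, i.e. the point $(\bar x,\bar y)$ with $\Phi_\tau(z;\bar x,y')\le\Phi_\tau(z;\bar x,\bar y)\le\Phi_\tau(z;x',\bar y)$ for all $(x',y')\in Z$. *)

From HB Require Import structures.
From mathcomp Require Import all_boot all_order all_algebra.
From mathcomp Require Import all_classical all_reals.

Set Implicit Arguments. Unset Strict Implicit. Unset Printing Implicit Defensive.
Import Order.TTheory GRing.Theory Num.Theory.
Local Open Scope ring_scope.
Local Open Scope ereal_scope.

Record metric_space (R : realType) := MetricSpace {
  mcarrier :> Type;
  mdist : mcarrier -> mcarrier -> R;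
  mdist_ge0 : forall x y, (0 <= mdist x y)%R;
  mdist_eq0 : forall x y, mdist x y = 0%R <-> x = y;
  mdist_sym : forall x y, mdist x y = mdist y x;
  mdist_tri : forall x y z, (mdist x z <= mdist x y + mdist y z)%R;
  mcomplete : forall u : nat -> mcarrier,
    (forall e : R, (0 < e)%R -> exists N : nat, forall m n : nat,
        (N <= m)%N -> (N <= n)%N -> (mdist (u m) (u n) < e)%R) ->
    exists l : mcarrier, forall e : R, (0 < e)%R -> exists N : nat,
        forall n : nat, (N <= n)%N -> (mdist (u n) l < e)%R
}.
Arguments mdist {R} m _ _.

Section Defs.
Variables (R : realType) (X Y : metric_space R).
Implicit Types (phi : X -> Y -> \bar R).

Definition DX phi (x : X) : Prop := forall y : Y, phi x y < +oo.
Definition DY phi (y : Y) : Prop := forall x : X, -oo < phi x y.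
Definition Dphi phi (x : X) (y : Y) : Prop := DX phi x /\ DY phi y.

Definition proper_sp phi : Prop := exists x y, Dphi phi x y.

Definition usc (T : metric_space R) (f : T -> \bar R) : Prop :=
  forall (t : T) (c : R), f t < c%:E ->
    exists2 d : R, (0 < d)%R & forall s : T, (mdist T s t < d)%R -> f s < c%:E.
Definition lsc (T : metric_space R) (f : T -> \bar R) : Prop :=
  forall (t : T) (c : R), c%:E < f t ->
    exists2 d : R, (0 < d)%R & forall s : T, (mdist T s t < d)%R -> c%:E < f s.

Definition closed_sp phi : Prop :=
  (forall x, DX phi x -> usc (fun y => phi x y)) /\
  (forall y, DY phi y -> lsc (fun x => phi x y)).

Definition A1 phi : Prop :=
  (forall x y, ~ DX phi x -> DY phi y -> phi x y = +oo) /\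
  (forall x y, DX phi x -> ~ DY phi y -> phi x y = -oo).

Definition lam_minus (lam : R) : R := (Num.max (- lam) 0)%R.

(* tau in (0, 1/lambda^-), with 1/lambda^- = +oo when lambda^- = 0 *)
Definition tau_adm (lam tau : R) : Prop :=
  (0 < tau)%R /\ (lam_minus lam = 0%R \/ (tau < 1 / lam_minus lam)%R).

Definition Phi_tau phi (tau : R) (x : X) (y : Y) (x' : X) (y' : Y) : \bar R :=
  phi x' y' + ((mdist X x' x ^+ 2 - mdist Y y' y ^+ 2) / (2 * tau))%:E.

Definition curve_cont (T : metric_space R) (g : R -> T) : Prop :=
  forall t : R, (0 <= t <= 1)%R -> forall e : R, (0 < e)%R ->
    exists2 d : R, (0 < d)%R & forall s : R, (0 <= s <= 1)%R ->
      (`|s - t| < d)%R -> (mdist T (g s) (g t) < e)%R.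

Definition cvx_ccv_along (f : X -> Y -> \bar R) (mu : R)
    (gam : R -> X) (sig : R -> Y) : Prop :=
  forall t : R, (0 <= t <= 1)%R ->
    (forall y : Y, f (gam t) y <=
        (1 - t)%:E * f (gam 0%R) y + t%:E * f (gam 1%R) y
        - (mu / 2 * t * (1 - t) * mdist X (gam 0%R) (gam 1%R) ^+ 2)%:E) /\
    (forall x : X, f x (sig t) >=
        (1 - t)%:E * f x (sig 0%R) + t%:E * f x (sig 1%R)
        + (mu / 2 * t * (1 - t) * mdist Y (sig 0%R) (sig 1%R) ^+ 2)%:E).

Definition A2 phi (lam : R) : Prop :=
  forall (x : X) (y : Y) (x0 : X) (y0 : Y) (x1 : X) (y1 : Y),
    Dphi phi x0 y0 -> Dphi phi x1 y1 ->
    exists (gam : R -> X) (sig : R -> Y),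
      [/\ curve_cont gam, curve_cont sig,
          gam 0%R = x0 /\ gam 1%R = x1, sig 0%R = y0 /\ sig 1%R = y1 &
          forall tau : R, tau_adm lam tau ->
            cvx_ccv_along (Phi_tau phi tau x y) (tau^-1 + lam) gam sig].

(* (xb, yb) is a saddle point of z' |-> Phi_tau(z; z'); the resolvent J_tau z
   is (by the paper) the unique such point. *)
Definition is_saddle phi (tau : R) (x : X) (y : Y) (xb : X) (yb : Y) : Prop :=
  forall (x' : X) (y' : Y),
    Phi_tau phi tau x y xb y' <= Phi_tau phi tau x y xb yb /\
    Phi_tau phi tau x y xb yb <= Phi_tau phi tau x y x' yb.

End Defs.

(* At a saddle point (Jx, Jy) of z' |-> Phi_tau(z; z'), the map t |-> Phi_tau(z; gam t, Jy)
   along the curve of (A2) from Jx to x' is (1/tau + lam)-convex and minimal at t = 0.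
   Comparing its value at t with the convexity bound, dividing by t and letting t -> 0
   gives Phi_tau(z; Jx, Jy) + (1/tau + lam)/2 d^2(Jx, x') <= Phi_tau(z; x', Jy), which is
   the first inequality after expanding Phi_tau.  The second one is the symmetric argument
   for the concave map t |-> Phi_tau(z; Jx, sig t), maximal at t = 0. *)
From mathcomp Require Import all_boot all_order all_algebra.
From mathcomp Require Import all_classical all_reals.
From mathcomp Require Import ring lra.

Set Implicit Arguments.
Unset Strict Implicit.
Unset Printing Implicit Defensive.

Import Order.TTheory GRing.Theory Num.Theory.
Local Open Scope ring_scope.

Lemma ler_of_ler_addr_mulr (R : realType) (a b c : R) :
  (forall t, 0 < t <= 1 -> a <= b + c * t) -> a <= b.
Proof.
move=> le_ab_ct.
have [c_le0|c_gt0] := leP c 0.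
  by have := le_ab_ct 1; rewrite ltr01 lexx => /(_ isT); lra.
rewrite leNgt; apply/negP => lt_ba.
pose t := Num.min 1 ((a - b) / (2 * c)).
have t_gt0 : 0 < t by rewrite lt_min ltr01 /= divr_gt0 ?subr_gt0 //; lra.
have t_le1 : t <= 1 by rewrite ge_min lexx.
have ct_small : c * t <= (a - b) / 2.
  have -> : (a - b) / 2 = c * ((a - b) / (2 * c)) by field; lra.
  by rewrite ler_pM2l // ge_min lexx orbT.
by have := le_ab_ct t; rewrite t_gt0 t_le1 => /(_ isT); lra.
Qed.

Lemma convex_min_gapr (R : realType) (a b mu D : R) :
  (forall t, 0 < t <= 1 -> a <= (1 - t) * a + t * b - mu / 2 * t * (1 - t) * D) ->
  a + mu / 2 * D <= b.
Proof.
move=> cvx; apply: (@ler_of_ler_addr_mulr _ _ _ (mu / 2 * D)) => t t01.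
have /andP[t_gt0 _] := t01.
rewrite -subr_le0 -(pmulr_rle0 _ t_gt0).
by have := cvx t t01; nra.
Qed.

Local Open Scope ereal_scope.

Lemma convex_min_gape (R : realType) (f : R -> \bar R) (mu D : R) :
  f 0%R \is a fin_num -> f 1%R \is a fin_num ->
  (forall t, (0 < t <= 1)%R -> f 0%R <= f t) ->
  (forall t, (0 < t <= 1)%R ->
     f t <= (1 - t)%:E * f 0%R + t%:E * f 1%R - (mu / 2 * t * (1 - t) * D)%:E) ->
  f 0%R + (mu / 2 * D)%:E <= f 1%R.
Proof.
move=> /EFin_fin_numP[a ->] /EFin_fin_numP[b ->] min0 cvx.
rewrite -EFinD lee_fin; apply: convex_min_gapr => t t01.
have := le_trans (min0 t t01) (cvx t t01).
by rewrite -!EFinM -EFinN -!EFinD lee_fin.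
Qed.

Lemma concave_max_gape (R : realType) (f : R -> \bar R) (mu D : R) :
  f 0%R \is a fin_num -> f 1%R \is a fin_num ->
  (forall t, (0 < t <= 1)%R -> f t <= f 0%R) ->
  (forall t, (0 < t <= 1)%R ->
     (1 - t)%:E * f 0%R + t%:E * f 1%R + (mu / 2 * t * (1 - t) * D)%:E <= f t) ->
  f 1%R + (mu / 2 * D)%:E <= f 0%R.
Proof.
move=> /EFin_fin_numP[a ->] /EFin_fin_numP[b ->] max0 ccv.
rewrite -EFinD lee_fin.
suff : (- a + mu / 2 * D <= - b)%R by lra.
apply: convex_min_gapr => t t01.
have := le_trans (ccv t t01) (max0 t t01).
by rewrite -!EFinM -!EFinD lee_fin; lra.
Qed.

Section SaddlePoint.
Variables (R : realType) (X Y : metric_space R) (phi : X -> Y -> \bar R).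
Variables (tau : R) (x : X) (y : Y) (Jx : X) (Jy : Y).
Hypothesis saddle : is_saddle phi tau x y Jx Jy.

Lemma Dphi_fin_num a b : DX phi a -> DY phi b -> phi a b \is a fin_num.
Proof. by move=> Da Db; apply/fin_numPlt; rewrite Da Db. Qed.

Lemma Phi_tau_fin_num a b :
  phi a b \is a fin_num -> Phi_tau phi tau x y a b \is a fin_num.
Proof. by move=> fin_ab; rewrite fin_numD fin_ab. Qed.

Lemma saddle_DX x0 : DX phi x0 -> DX phi Jx.
Proof.
move=> Dx0 y1; have := le_trans (saddle x0 y1).1 (saddle x0 Jy).2.
move: (Dx0 Jy); rewrite /Phi_tau.
by case: (phi x0 Jy) => [r||] //; case: (phi Jx y1) => [s||] //; rewrite ?ltry.
Qed.

Lemma saddle_DY y0 : DY phi y0 -> DY phi Jy.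
Proof.
move=> Dy0 x1; have := le_trans (saddle Jx y0).1 (saddle x1 y0).2.
move: (Dy0 Jx); rewrite /Phi_tau.
by case: (phi Jx y0) => [r||] //; case: (phi x1 Jy) => [s||] //; rewrite ?ltNyr.
Qed.

Variables (lam : R) (gam : R -> X) (sig : R -> Y).
Hypothesis cvx_ccv : cvx_ccv_along (Phi_tau phi tau x y) (tau^-1 + lam) gam sig.

Lemma saddle_gapX x' : gam 0%R = Jx -> gam 1%R = x' ->
  phi Jx Jy \is a fin_num -> phi x' Jy \is a fin_num ->
  Phi_tau phi tau x y Jx Jy + ((tau^-1 + lam) / 2 * mdist X Jx x' ^+ 2)%:E
    <= Phi_tau phi tau x y x' Jy.
Proof.
move=> gam0 gam1 fin0 fin1; rewrite -gam0 -gam1.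
apply: (@convex_min_gape _ (fun t => Phi_tau phi tau x y (gam t) Jy)).
- by rewrite gam0; exact: Phi_tau_fin_num.
- by rewrite gam1; exact: Phi_tau_fin_num.
- by move=> t _; rewrite gam0; exact: (saddle _ _).2.
- move=> t /andP[/ltW t_ge0 t_le1].
  by have [+ _] := cvx_ccv (t := t) (introT andP (conj t_ge0 t_le1)); apply.
Qed.

Lemma saddle_gapY y' : sig 0%R = Jy -> sig 1%R = y' ->
  phi Jx Jy \is a fin_num -> phi Jx y' \is a fin_num ->
  Phi_tau phi tau x y Jx y' + ((tau^-1 + lam) / 2 * mdist Y Jy y' ^+ 2)%:E
    <= Phi_tau phi tau x y Jx Jy.
Proof.
move=> sig0 sig1 fin0 fin1; rewrite -sig0 -sig1.
apply: (@concave_max_gape _ (fun t => Phi_tau phi tau x y Jx (sig t))).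
- by rewrite sig0; exact: Phi_tau_fin_num.
- by rewrite sig1; exact: Phi_tau_fin_num.
- by move=> t _; rewrite sig0; exact: (saddle _ _).1.
- move=> t /andP[/ltW t_ge0 t_le1].
  by have [_ +] := cvx_ccv (t := t) (introT andP (conj t_ge0 t_le1)); apply.
Qed.

Hypothesis tau_gt0 : (0 < tau)%R.

Let modulus_split d : ((tau^-1 + lam) / 2 * d = d / (2 * tau) + lam / 2 * d)%R.
Proof. by field; rewrite gt_eqF. Qed.

Lemma saddle_variational_ineqX x' : gam 0%R = Jx -> gam 1%R = x' ->
  phi Jx Jy \is a fin_num -> phi x' Jy \is a fin_num ->
  ((mdist X Jx x' ^+ 2 - mdist X x x' ^+ 2) / (2 * tau)
     + lam / 2 * mdist X Jx x' ^+ 2)%:E + phi Jx Jy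
    <= phi x' Jy - (mdist X Jx x ^+ 2 / (2 * tau))%:E.
Proof.
move=> gam0 gam1 fin0 fin1; have := saddle_gapX gam0 gam1 fin0 fin1.
rewrite /Phi_tau; move: fin0 fin1 => /EFin_fin_numP[p0 ->] /EFin_fin_numP[p1 ->].
by rewrite -EFinN -!EFinD !lee_fin modulus_split (mdist_sym x'); lra.
Qed.

Lemma saddle_variational_ineqY y' : sig 0%R = Jy -> sig 1%R = y' ->
  phi Jx Jy \is a fin_num -> phi Jx y' \is a fin_num ->
  ((mdist Y Jy y' ^+ 2 - mdist Y y y' ^+ 2) / (2 * tau)
     + lam / 2 * mdist Y Jy y' ^+ 2)%:E + phi Jx y'
    <= phi Jx Jy - (mdist Y Jy y ^+ 2 / (2 * tau))%:E.
Proof.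
move=> sig0 sig1 fin0 fin1; have := saddle_gapY sig0 sig1 fin0 fin1.
rewrite /Phi_tau; move: fin0 fin1 => /EFin_fin_numP[p0 ->] /EFin_fin_numP[p1 ->].
by rewrite -EFinN -!EFinD !lee_fin modulus_split (mdist_sym y'); lra.
Qed.

End SaddlePoint.

Theorem mainTheorem10 (R : realType) (X Y : metric_space R)
  (phi : X -> Y -> \bar R) (lam tau : R) :
  proper_sp phi -> closed_sp phi -> A1 phi -> A2 phi lam ->
  tau_adm lam tau ->
  forall (x : X) (y : Y) (Jx : X) (Jy : Y),
    is_saddle phi tau x y Jx Jy ->
  forall (x' : X) (y' : Y), Dphi phi x' y' ->
    ((mdist X Jx x' ^+ 2 - mdist X x x' ^+ 2) / (2 * tau)
       + lam / 2 * mdist X Jx x' ^+ 2)%:E + phi Jx Jy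
      <= phi x' Jy - (mdist X Jx x ^+ 2 / (2 * tau))%:E
  /\
    ((mdist Y Jy y' ^+ 2 - mdist Y y y' ^+ 2) / (2 * tau)
       + lam / 2 * mdist Y Jy y' ^+ 2)%:E + phi Jx y'
      <= phi Jx Jy - (mdist Y Jy y ^+ 2 / (2 * tau))%:E.
Proof.
(* Closedness and (A1) only serve the existence of the saddle point, which is given here. *)
move=> [x0 [y0 [Dx0 Dy0]]] _ _ A2_lam tau_lam x y Jx Jy saddle x' y' [Dx' Dy'].
have tau_gt0 : (0 < tau)%R by case: tau_lam.
have DJx := saddle_DX saddle Dx0.
have DJy := saddle_DY saddle Dy0.
have [gam [sig [_ _ [gam0 gam1] [sig0 sig1] cvx_ccv]]] :=
  A2_lam x y Jx Jy x' y' (conj DJx DJy) (conj Dx' Dy').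
split.
- exact: (saddle_variational_ineqX saddle (cvx_ccv _ tau_lam) tau_gt0 gam0 gam1
    (Dphi_fin_num DJx DJy) (Dphi_fin_num Dx' DJy)).
- exact: (saddle_variational_ineqY saddle (cvx_ccv _ tau_lam) tau_gt0 sig0 sig1
    (Dphi_fin_num DJx DJy) (Dphi_fin_num DJx Dy')).
Qed.
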